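(* Let $a,c,p\in\mathbb{C}$ with $-c\notin\mathbb{N}\cup\{0\}$. Define sequences $(u_n)_{n\ge0}$ and $(v_n)_{n\ge0}$ by $u_0=1$, $u_1=\frac{a}{c}+p$, $v_0=1$, $v_1=\frac{a}{c}-p$ and, for all integers $n\ge1$, \[ u_{n+1}=\frac{a+p(c+2n)+n}{(n+1)(c+n)}u_n-\frac{p(p+1)}{(n+1)(c+n)}u_{n-1}, \] \[ v_{n+1}=\frac{a-p(c+2n)+n}{(n+1)(c+n)}v_n-\frac{(p-1)p}{(n+1)(c+n)}v_{n-1}. \] Then \[ \cosh(pz)\,M(a,c;z)=\sum_{n=0}^\infty\frac{u_n+v_n}{2}z^n,\qquad z\in\mathbb{C}. \]
   Context: For $a\in\mathbb{C}$, $(a)_n=a(a+1)\cdots(a+n-1)$ denotes the Pochhammer symbol, with $(a)_0=1$. For $a,c\in\mathbb{C}$ with $-c\notin\mathbb{N}\cup\{0\}$, the confluent hypergeometric (Kummer) function is $M(a,c;z)=\sum_{n=0}^\infty \frac{(a)_n}{(c)_n\,n!}z^n$, $z\in\mathbb{C}$. *)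

From Stdlib Require Import Reals Arith Factorial.
From Coquelicot Require Import Coquelicot.

Open Scope C_scope.

Fixpoint poch (a : C) (n : nat) : C :=
  match n with
  | O => 1
  | S m => poch a m * (a + RtoC (INR m))
  end.

Definition kummer_term (a c z : C) (n : nat) : C :=
  poch a n / (poch c n * RtoC (INR (fact n))) * z ^ n.

Definition kummerM (a c z : C) : C :=
  (Series (fun n => Re (kummer_term a c z n)),
   Series (fun n => Im (kummer_term a c z n))).

Definition cexp (w : C) : C :=
  (exp (Re w) * cos (Im w), exp (Re w) * sin (Im w))%R.

Definition ccosh (w : C) : C := (cexp w + cexp (- w)) / 2.

From Stdlib Require Import Reals Lra Lia Factorial.
From Coquelicot Require Import Coquelicot.
Open Scope C_scope.

(* Let e_k = p^k / k! and m_k = (a)_k / ((c)_k k!) be the Taylor coefficients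
   of e^{pz} and M(a,c;z), and W = e * m those of their product.  Kummer's
   equation z M'' + (c - z) M' - a M = 0 is a two-term relation for m;
   convolving it with e, and using the Leibniz rule with e' = p e to express
   e * m' and e * m'' through W, yields exactly the three-term recurrence of u.
   Hence u = W and, with p replaced by -p, v = e_{-p} * m.  Both Taylor series
   converge absolutely (the ratio test for M), so the Cauchy product theorem
   sums them to e^{+-pz} M(a,c;z), and averaging gives cosh(pz) M(a,c;z). *)

Lemma RtoC_neq_0 (r : R) : r <> 0%R -> RtoC r <> 0.
Proof. intros Hr E. apply Hr. now apply RtoC_inj. Qed.

Lemma RtoC_INR_S (n : nat) : RtoC (INR (S n)) = RtoC (INR n) + 1.
Proof. now rewrite S_INR, RtoC_plus. Qed.

Lemma RtoC_INR_S_neq_0 (n : nat) : RtoC (INR (S n)) <> 0.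
Proof. apply RtoC_neq_0, not_0_INR. lia. Qed.

Lemma RtoC_fact_neq_0 (n : nat) : RtoC (INR (fact n)) <> 0.
Proof. apply RtoC_neq_0, INR_fact_neq_0. Qed.

(* Coquelicot's [sum_n] lemmas restated with [Cplus]/[Cmult], so that they
   rewrite syntactically in goals about [C]. *)
Lemma sum_n_Cplus (f g : nat -> C) (n : nat) :
  sum_n (fun k => f k + g k) n = sum_n f n + sum_n g n.
Proof. exact (sum_n_plus f g n). Qed.

Lemma sum_n_Cmult_l (x : C) (f : nat -> C) (n : nat) :
  sum_n (fun k => x * f k) n = x * sum_n f n.
Proof. exact (sum_n_mult_l (K := C_Ring) x f n). Qed.

Lemma sum_n_CSr (f : nat -> C) (n : nat) : sum_n f (S n) = sum_n f n + f (S n).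
Proof. exact (sum_Sn f n). Qed.

Lemma sum_n_CSl (f : nat -> C) (n : nat) :
  sum_n f (S n) = f 0%nat + sum_n (fun k => f (S k)) n.
Proof. unfold sum_n. rewrite sum_Sn_m, <- sum_n_m_S by lia. reflexivity. Qed.

Lemma sum_n_Cext (f g : nat -> C) (n : nat) :
  (forall k, (k <= n)%nat -> f k = g k) -> sum_n f n = sum_n g n.
Proof. exact (sum_n_ext_loc f g n). Qed.

Definition cauchy (A B : nat -> C) (n : nat) : C :=
  sum_n (fun k => A k * B (n - k)%nat) n.

(* For f = sum_k A k z^k, these are the coefficients of f' and of z f'. *)
Definition deriv_coef (A : nat -> C) (k : nat) : C := RtoC (INR (S k)) * A (S k).

Definition euler_coef (A : nat -> C) (k : nat) : C := RtoC (INR k) * A k.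

Lemma cauchy_ext_l (A A' B : nat -> C) (n : nat) :
  (forall k, A k = A' k) -> cauchy A B n = cauchy A' B n.
Proof. intros H. apply sum_n_Cext. intros k _. now rewrite H. Qed.

Lemma cauchy_ext_r (A B B' : nat -> C) (n : nat) :
  (forall k, B k = B' k) -> cauchy A B n = cauchy A B' n.
Proof. intros H. apply sum_n_Cext. intros k _. now rewrite H. Qed.

Lemma cauchy_scal_l (x : C) (A B : nat -> C) (n : nat) :
  cauchy (fun k => x * A k) B n = x * cauchy A B n.
Proof.
  unfold cauchy. rewrite <- sum_n_Cmult_l.
  apply sum_n_Cext. intros k _. ring.
Qed.

Lemma cauchy_scal_r (x : C) (A B : nat -> C) (n : nat) :
  cauchy A (fun k => x * B k) n = x * cauchy A B n.
Proof.
  unfold cauchy. rewrite <- sum_n_Cmult_l.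
  apply sum_n_Cext. intros k _. ring.
Qed.

Lemma cauchy_plus_r (A B1 B2 : nat -> C) (n : nat) :
  cauchy A (fun k => B1 k + B2 k) n = cauchy A B1 n + cauchy A B2 n.
Proof.
  unfold cauchy. rewrite <- sum_n_Cplus.
  apply sum_n_Cext. intros k _. ring.
Qed.

Lemma cauchy_euler (A B : nat -> C) (n : nat) :
  RtoC (INR n) * cauchy A B n = cauchy (euler_coef A) B n + cauchy A (euler_coef B) n.
Proof.
  unfold cauchy. rewrite <- sum_n_Cmult_l, <- sum_n_Cplus.
  apply sum_n_Cext. intros k Hk. unfold euler_coef.
  rewrite minus_INR, RtoC_minus by exact Hk. ring.
Qed.

Lemma cauchy_euler_l_S (A B : nat -> C) (n : nat) :
  cauchy (euler_coef A) B (S n) = cauchy (deriv_coef A) B n.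
Proof.
  unfold cauchy. rewrite sum_n_CSl. unfold euler_coef at 1. simpl INR.
  rewrite !Cmult_0_l, Cplus_0_l. reflexivity.
Qed.

Lemma cauchy_euler_r_S (A B : nat -> C) (n : nat) :
  cauchy A (euler_coef B) (S n) = cauchy A (deriv_coef B) n.
Proof.
  unfold cauchy. rewrite sum_n_CSr, Nat.sub_diag. unfold euler_coef at 2. simpl INR.
  rewrite Cmult_0_l, Cmult_0_r, Cplus_0_r.
  apply sum_n_Cext. intros k Hk. now replace (S n - k)%nat with (S (n - k)) by lia.
Qed.

Lemma cauchy_deriv (A B : nat -> C) (n : nat) :
  deriv_coef (cauchy A B) n = cauchy (deriv_coef A) B n + cauchy A (deriv_coef B) n.
Proof.
  unfold deriv_coef at 1. rewrite cauchy_euler, cauchy_euler_l_S, cauchy_euler_r_S.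
  reflexivity.
Qed.

Section ProductRecurrence.

Variables (a c p : C) (e m : nat -> C).
Hypothesis deriv_e : forall k, deriv_coef e k = p * e k.
Hypothesis kummer_m :
  forall k, RtoC (INR (S k)) * (c + RtoC (INR k)) * m (S k) = (a + RtoC (INR k)) * m k.

Lemma cauchy_deriv_r_exp (B : nat -> C) (n : nat) :
  cauchy e (deriv_coef B) n = RtoC (INR (S n)) * cauchy e B (S n) - p * cauchy e B n.
Proof.
  transitivity (deriv_coef (cauchy e B) n - p * cauchy e B n); [|reflexivity].
  rewrite cauchy_deriv, (cauchy_ext_l (deriv_coef e) (fun k => p * e k)) by exact deriv_e.
  rewrite cauchy_scal_l. ring.
Qed.

(* Coefficientwise form of Kummer's equation z w'' + (c - z) w' - a w = 0. *)
Lemma kummer_coef_ode (k : nat) :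
  euler_coef (deriv_coef m) k + c * deriv_coef m k = euler_coef m k + a * m k.
Proof.
  unfold euler_coef, deriv_coef.
  transitivity (RtoC (INR (S k)) * (c + RtoC (INR k)) * m (S k)).
  - rewrite RtoC_INR_S. ring.
  - rewrite kummer_m. ring.
Qed.

Lemma cauchy_exp_kummer_rec (n : nat) :
  let W := cauchy e m in
  (RtoC (INR (S n)) + 1) * (c + RtoC (INR (S n))) * W (S (S n))
  = (a + p * (c + 2 * RtoC (INR (S n))) + RtoC (INR (S n))) * W (S n)
    - p * (p + 1) * W n.
Proof.
  intros W.
  assert (first_order :
    cauchy e (deriv_coef (deriv_coef m)) n + c * cauchy e (deriv_coef m) (S n)
    = cauchy e (deriv_coef m) n + a * cauchy e m (S n)).
  { rewrite <- cauchy_euler_r_S, <- (cauchy_euler_r_S e m n).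
    rewrite <- !cauchy_scal_r, <- !cauchy_plus_r.
    apply cauchy_ext_r. exact kummer_coef_ode. }
  rewrite !cauchy_deriv_r_exp in first_order. unfold W.
  rewrite !RtoC_INR_S in first_order. rewrite !RtoC_INR_S.
  apply Ceq_minus. apply Ceq_minus in first_order. rewrite <- first_order. ring.
Qed.

End ProductRecurrence.

Lemma rec2_unique {T : Type} (F : nat -> T -> T -> T) (x y : nat -> T) :
  x 0%nat = y 0%nat -> x 1%nat = y 1%nat ->
  (forall n, x (S (S n)) = F n (x (S n)) (x n)) ->
  (forall n, y (S (S n)) = F n (y (S n)) (y n)) ->
  forall n, x n = y n.
Proof.
  intros H0 H1 Hx Hy.
  assert (H : forall n, x n = y n /\ x (S n) = y (S n)).
  { induction n as [|n [IH IHS]]; [easy|]. split; [exact IHS|].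
    now rewrite Hx, Hy, IH, IHS. }
  intros n. apply H.
Qed.

Definition exp_coef (w : C) (k : nat) : C := w ^ k / RtoC (INR (fact k)).

Definition kummer_coef (a c : C) (k : nat) : C :=
  poch a k / (poch c k * RtoC (INR (fact k))).

Lemma deriv_exp_coef (w : C) (k : nat) : deriv_coef (exp_coef w) k = w * exp_coef w k.
Proof.
  unfold deriv_coef, exp_coef. rewrite fact_simpl, mult_INR, RtoC_mult, Cpow_S.
  field. split; [apply RtoC_fact_neq_0 | apply RtoC_INR_S_neq_0].
Qed.

Lemma Re_sum_n (f : nat -> C) (n : nat) : Re (sum_n f n) = sum_n (fun k => Re (f k)) n.
Proof.
  induction n as [|n IH].
  - now rewrite !sum_O.
  - rewrite !sum_Sn, <- IH. reflexivity.
Qed.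

Lemma Im_sum_n (f : nat -> C) (n : nat) : Im (sum_n f n) = sum_n (fun k => Im (f k)) n.
Proof.
  induction n as [|n IH].
  - now rewrite !sum_O.
  - rewrite !sum_Sn, <- IH. reflexivity.
Qed.

(* The uniform structure of [C] is the product one: balls split into real and
   imaginary parts. *)
Lemma is_series_C (f : nat -> C) (l : C) :
  is_series f l <->
  is_series (fun n => Re (f n)) (Re l) /\ is_series (fun n => Im (f n)) (Im l).
Proof.
  unfold is_series. split.
  - intros H. split; apply filterlim_locally; intros eps;
      generalize (proj1 (filterlim_locally _ _) H eps); apply filter_imp;
      intros n [Hre Him].
    + rewrite <- Re_sum_n. exact Hre.
    + rewrite <- Im_sum_n. exact Him.
  - intros [Hre Him]. apply filterlim_locally. intros eps.
    generalize (filter_and _ _ (proj1 (filterlim_locally _ _) Hre eps)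
                               (proj1 (filterlim_locally _ _) Him eps)).
    apply filter_imp. intros n [Bre Bim]. split.
    + change (ball (Re l) eps (Re (sum_n f n))). now rewrite Re_sum_n.
    + change (ball (Im l) eps (Im (sum_n f n))). now rewrite Im_sum_n.
Qed.

Lemma ex_series_Rabs_Re (f : nat -> C) :
  ex_series (fun n => Cmod (f n)) -> ex_series (fun n => Rabs (Re (f n))).
Proof.
  apply (ex_series_le (V := R_CompleteNormedModule)). intros n.
  change (Rabs (Rabs (Re (f n))) <= Cmod (f n))%R.
  rewrite Rabs_Rabsolu. apply re_le_Cmod.
Qed.

Lemma ex_series_Rabs_Im (f : nat -> C) :
  ex_series (fun n => Cmod (f n)) -> ex_series (fun n => Rabs (Im (f n))).
Proof.
  apply (ex_series_le (V := R_CompleteNormedModule)). intros n.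
  change (Rabs (Rabs (Im (f n))) <= Cmod (f n))%R.
  rewrite Rabs_Rabsolu. eapply Rle_trans; [apply Rmax_r | apply Rmax_Cmod].
Qed.

Lemma is_series_RtoC (f : nat -> R) (l : R) :
  is_series f l -> is_series (fun n => RtoC (f n)) (RtoC l).
Proof.
  intros H. apply is_series_C. split; [exact H|].
  apply (is_series_ext (fun n => scal 0%R (f n))); [intros n; apply Rmult_0_l|].
  replace (Im (RtoC l)) with (scal 0%R l) by apply Rmult_0_l.
  exact (is_series_scal_l 0%R f l H).
Qed.

Lemma is_series_cauchy (A B : nat -> C) (la lb : C) :
  is_series A la -> is_series B lb ->
  ex_series (fun n => Cmod (A n)) -> ex_series (fun n => Cmod (B n)) ->
  is_series (cauchy A B) (la * lb).
Proof.
  intros HA HB AA AB.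
  apply is_series_C in HA as [HAre HAim]. apply is_series_C in HB as [HBre HBim].
  pose proof (ex_series_Rabs_Re _ AA) as AAre. pose proof (ex_series_Rabs_Im _ AA) as AAim.
  pose proof (ex_series_Rabs_Re _ AB) as ABre. pose proof (ex_series_Rabs_Im _ AB) as ABim.
  apply is_series_C. split.
  - pose proof (is_series_minus _ _ _ _ (is_series_mult _ _ _ _ HAre HBre AAre ABre)
                                        (is_series_mult _ _ _ _ HAim HBim AAim ABim)) as P.
    revert P. apply is_series_ext. intros n.
    unfold cauchy. rewrite Re_sum_n, sum_n_Reals.
    change (plus ?x (opp ?y)) with (Rminus x y). rewrite <- minus_sum.
    apply sum_eq. intros k _. reflexivity.
  - pose proof (is_series_plus _ _ _ _ (is_series_mult _ _ _ _ HAre HBim AAre ABim)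
                                       (is_series_mult _ _ _ _ HAim HBre AAim ABre)) as P.
    revert P. apply is_series_ext. intros n.
    unfold cauchy. rewrite Im_sum_n, sum_n_Reals.
    change (plus ?x ?y) with (Rplus x y). rewrite <- plus_sum.
    apply sum_eq. intros k _. reflexivity.
Qed.

Lemma exp_coef_unique (w : C) (f : nat -> C) :
  f 0%nat = 1 -> (forall k, deriv_coef f k = w * f k) -> forall k, f k = exp_coef w k.
Proof.
  intros H0 Hf. induction k as [|k IH].
  - rewrite H0. unfold exp_coef. simpl. field.
  - pose proof (Hf k) as E. rewrite IH, <- deriv_exp_coef in E. unfold deriv_coef in E.
    pose proof (RtoC_INR_S_neq_0 k) as Hk.
    transitivity (/ RtoC (INR (S k)) * (RtoC (INR (S k)) * f (S k))); [field; exact Hk|].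
    rewrite E. field. exact Hk.
Qed.

Lemma cauchy_exp_coef (x y : C) (n : nat) :
  cauchy (exp_coef x) (exp_coef y) n = exp_coef (x + y) n.
Proof.
  apply exp_coef_unique.
  - unfold cauchy, exp_coef. rewrite sum_O. simpl. field.
  - intros k. rewrite cauchy_deriv.
    rewrite (cauchy_ext_l (deriv_coef (exp_coef x)) (fun j => x * exp_coef x j))
      by apply deriv_exp_coef.
    rewrite (cauchy_ext_r _ (deriv_coef (exp_coef y)) (fun j => y * exp_coef y j))
      by apply deriv_exp_coef.
    rewrite cauchy_scal_l, cauchy_scal_r. ring.
Qed.

Lemma Cmod_exp_coef (w : C) (n : nat) :
  Cmod (exp_coef w n) = (Cmod w ^ n / INR (fact n))%R.
Proof.
  unfold exp_coef. rewrite Cmod_div, Cmod_pow, Cmod_R by apply RtoC_fact_neq_0.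
  rewrite Rabs_right; [reflexivity|]. apply Rle_ge, pos_INR.
Qed.

Lemma ex_series_Cmod_exp_coef (w : C) : ex_series (fun n => Cmod (exp_coef w n)).
Proof.
  exists (exp (Cmod w)).
  pose proof (proj1 (is_pseries_R _ _ _) (is_exp_Reals (Cmod w))) as H.
  revert H. apply is_series_ext. intros n.
  rewrite Cmod_exp_coef. unfold Rdiv. apply Rmult_comm.
Qed.

Lemma is_series_exp_coef_R (x : R) : is_series (exp_coef (RtoC x)) (RtoC (exp x)).
Proof.
  apply (is_series_ext (fun n => RtoC (x ^ n / INR (fact n)))).
  - intros n. unfold exp_coef. now rewrite RtoC_div, RtoC_pow by apply INR_fact_neq_0.
  - apply is_series_RtoC. pose proof (proj1 (is_pseries_R _ _ _) (is_exp_Reals x)) as H.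
    revert H. apply is_series_ext. intros n. unfold Rdiv. apply Rmult_comm.
Qed.

Lemma filterlim_div2 : filterlim Nat.div2 eventually eventually.
Proof.
  intros P [N HN]. exists (2 * N)%nat. intros n Hn. apply HN.
  pose proof (Nat.div2_odd n) as E. destruct (Nat.odd n); simpl in E; lia.
Qed.

Lemma is_series_spread_even (g h : nat -> R) (l : R) :
  (forall k, h (2 * k)%nat = g k) -> (forall k, h (S (2 * k)) = 0%R) ->
  is_series g l -> is_series h l.
Proof.
  intros Heven Hodd Hg.
  assert (Hpair : forall k, sum_n h (2 * k) = sum_n g k /\ sum_n h (S (2 * k)) = sum_n g k).
  { induction k as [|k [_ IH]].
    - change (sum_n h 0 = sum_n g 0 /\ sum_n h 1 = sum_n g 0).
      pose proof (Heven 0%nat) as E0. pose proof (Hodd 0%nat) as E1. simpl in E0, E1.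
      rewrite sum_Sn, !sum_O, E0, E1. split; [reflexivity | apply Rplus_0_r].
    - replace (2 * S k)%nat with (S (S (2 * k))) by lia.
      assert (Hk : sum_n h (S (S (2 * k))) = sum_n g (S k)).
      { rewrite sum_Sn, IH, sum_Sn. replace (S (S (2 * k))) with (2 * S k)%nat by lia.
        now rewrite Heven. }
      split; [exact Hk|].
      rewrite sum_Sn, Hk. replace (S (S (2 * k))) with (2 * S k)%nat by lia.
      rewrite Hodd. apply Rplus_0_r. }
  apply (filterlim_ext (fun n => sum_n g (Nat.div2 n))).
  - intros n. destruct (Nat.Even_or_Odd n) as [[k ->] | [k ->]].
    + rewrite Nat.div2_double. symmetry. apply Hpair.
    + rewrite Nat.add_1_r, Nat.div2_succ_double. symmetry. apply Hpair.
  - apply (filterlim_comp _ _ _ Nat.div2 (sum_n g) _ eventually).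
    + exact filterlim_div2.
    + exact Hg.
Qed.

Lemma is_series_spread_odd (g h : nat -> R) (l : R) :
  (forall k, h (2 * k)%nat = 0%R) -> (forall k, h (S (2 * k)) = g k) ->
  is_series g l -> is_series h l.
Proof.
  intros Heven Hodd Hg. apply is_series_decr_1.
  pose proof (Heven 0%nat) as E0. simpl in E0. rewrite E0.
  change (is_series (fun k => h (S k)) (l + - 0)%R).
  rewrite Ropp_0, Rplus_0_r. apply (is_series_spread_even g); [exact Hodd| |exact Hg].
  intros k. replace (S (S (2 * k))) with (2 * S k)%nat by lia. apply Heven.
Qed.

Lemma is_series_cos (y : R) :
  is_series (fun k => ((-1) ^ k * y ^ (2 * k) / INR (fact (2 * k)))%R) (cos y).
Proof.
  unfold cos. destruct (exist_cos (Rsqr y)) as [l Hl].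
  apply is_series_Reals in Hl. revert Hl. apply is_series_ext. intros k.
  change ((-1) ^ k / INR (fact (2 * k)) * Rsqr y ^ k
          = (-1) ^ k * y ^ (2 * k) / INR (fact (2 * k)))%R.
  rewrite pow_mult, Rsqr_pow2. unfold Rdiv. ring.
Qed.

Lemma is_series_sin (y : R) :
  is_series (fun k => ((-1) ^ k * y ^ (S (2 * k)) / INR (fact (S (2 * k))))%R) (sin y).
Proof.
  unfold sin. destruct (exist_sin (Rsqr y)) as [l Hl].
  apply is_series_Reals, (is_series_scal_l y) in Hl. revert Hl. apply is_series_ext. intros k.
  unfold sin_n. replace (2 * k + 1)%nat with (S (2 * k)) by lia.
  change (y * ((-1) ^ k / INR (fact (S (2 * k))) * Rsqr y ^ k)
          = (-1) ^ k * (y * y ^ (2 * k)) / INR (fact (S (2 * k))))%R.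
  rewrite pow_mult, Rsqr_pow2. unfold Rdiv. ring.
Qed.

Lemma pow_imag_even (y : R) (k : nat) :
  ((0%R, y) : C) ^ (2 * k) = RtoC ((-1) ^ k * y ^ (2 * k))%R.
Proof.
  induction k as [|k IH].
  - apply injective_projections; simpl; ring.
  - replace (2 * S k)%nat with (S (S (2 * k))) by lia. rewrite !Cpow_S, IH.
    change (y ^ S (S (2 * k)))%R with (y * (y * y ^ (2 * k)))%R.
    apply injective_projections; simpl; ring.
Qed.

Lemma pow_imag_odd (y : R) (k : nat) :
  ((0%R, y) : C) ^ (S (2 * k)) = ((0%R, ((-1) ^ k * y ^ (S (2 * k)))%R) : C).
Proof.
  rewrite Cpow_S, pow_imag_even. change (y ^ S (2 * k))%R with (y * y ^ (2 * k))%R.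
  apply injective_projections; simpl; ring.
Qed.

Lemma Re_div_RtoC (z : C) (r : R) : r <> 0%R -> Re (z / RtoC r) = (Re z / r)%R.
Proof.
  intros Hr. unfold Cdiv. rewrite <- RtoC_inv by exact Hr.
  destruct z as [x y]. simpl. unfold Rdiv. ring.
Qed.

Lemma Im_div_RtoC (z : C) (r : R) : r <> 0%R -> Im (z / RtoC r) = (Im z / r)%R.
Proof.
  intros Hr. unfold Cdiv. rewrite <- RtoC_inv by exact Hr.
  destruct z as [x y]. simpl. unfold Rdiv. ring.
Qed.

Lemma is_series_exp_coef_imag (y : R) :
  is_series (exp_coef ((0%R, y) : C)) ((cos y, sin y) : C).
Proof.
  unfold exp_coef. apply is_series_C. split.
  - refine (is_series_spread_even _ _ _ _ _ (is_series_cos y)); intros k.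
    + rewrite Re_div_RtoC, pow_imag_even by apply INR_fact_neq_0. reflexivity.
    + rewrite Re_div_RtoC, pow_imag_odd by apply INR_fact_neq_0. apply Rmult_0_l.
  - refine (is_series_spread_odd _ _ _ _ _ (is_series_sin y)); intros k.
    + rewrite Im_div_RtoC, pow_imag_even by apply INR_fact_neq_0. apply Rmult_0_l.
    + rewrite Im_div_RtoC, pow_imag_odd by apply INR_fact_neq_0. reflexivity.
Qed.

Lemma is_series_cexp (w : C) : is_series (exp_coef w) (cexp w).
Proof.
  destruct w as [x y].
  apply (is_series_ext (cauchy (exp_coef (RtoC x)) (exp_coef (0%R, y)))).
  { intros n. rewrite cauchy_exp_coef. f_equal. apply injective_projections; simpl; ring. }
  replace (cexp (x, y)) with (RtoC (exp x) * ((cos y, sin y) : C)).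
  2:{ apply injective_projections; simpl; ring. }
  apply is_series_cauchy; auto using is_series_exp_coef_R, is_series_exp_coef_imag,
    ex_series_Cmod_exp_coef.
Qed.

Lemma ex_series_ratio (b : nat -> R) (q : R) (N : nat) :
  (0 <= q < 1)%R -> (forall n, 0 <= b n)%R ->
  (forall n, (N <= n)%nat -> b (S n) <= q * b n)%R -> ex_series b.
Proof.
  intros Hq Hpos Hratio.
  assert (Hgeom : forall k, (b (N + k)%nat <= b N * q ^ k)%R).
  { induction k as [|k IH].
    - rewrite Nat.add_0_r. simpl. lra.
    - rewrite Nat.add_succ_r. eapply Rle_trans; [apply Hratio; lia|].
      simpl. pose proof (Hpos (N + k)%nat). nra. }
  apply (ex_series_incr_n b N).
  apply (ex_series_le (V := R_CompleteNormedModule) _ (fun k => scal (b N) (q ^ k))%R).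
  - intros k. change (Rabs (b (N + k)%nat) <= b N * q ^ k)%R.
    rewrite Rabs_right by apply Rle_ge, Hpos. apply Hgeom.
  - apply (ex_series_scal_l (V := R_NormedModule)), ex_series_geom. rewrite Rabs_right; lra.
Qed.

Lemma cauchy_pow (A B : nat -> C) (z : C) (n : nat) :
  cauchy (fun k => A k * z ^ k) (fun k => B k * z ^ k) n = cauchy A B n * z ^ n.
Proof.
  unfold cauchy. rewrite Cmult_comm, <- sum_n_Cmult_l. apply sum_n_Cext. intros k Hk.
  replace n with (k + (n - k))%nat at 3 by lia. rewrite Cpow_add_r. ring.
Qed.

Lemma exp_coef_mult (w z : C) (k : nat) : exp_coef (w * z) k = exp_coef w k * z ^ k.
Proof.
  unfold exp_coef. rewrite Cpow_mult_l. field. apply RtoC_fact_neq_0.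
Qed.

Section Kummer.

Variables a c : C.
Hypothesis hc : forall n : nat, c <> - RtoC (INR n).

Lemma c_plus_INR_neq_0 (k : nat) : c + RtoC (INR k) <> 0.
Proof.
  intros E. apply (hc k). replace c with (c + RtoC (INR k) - RtoC (INR k)) by ring.
  rewrite E. ring.
Qed.

Lemma poch_neq_0 (k : nat) : poch c k <> 0.
Proof.
  induction k as [|k IH]; simpl.
  - exact C1_nz.
  - exact (Cmult_neq_0 _ _ IH (c_plus_INR_neq_0 k)).
Qed.

Lemma kummer_coef_S (k : nat) :
  RtoC (INR (S k)) * (c + RtoC (INR k)) * kummer_coef a c (S k)
  = (a + RtoC (INR k)) * kummer_coef a c k.
Proof.
  unfold kummer_coef. simpl poch. rewrite fact_simpl, mult_INR, RtoC_mult.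
  field.
  repeat split; auto using RtoC_fact_neq_0, RtoC_INR_S_neq_0, poch_neq_0, c_plus_INR_neq_0.
Qed.

Lemma cauchy_exp_kummer_eq (p : C) (u : nat -> C)
  (hu0 : u 0%nat = 1) (hu1 : u 1%nat = a / c + p)
  (hu : forall n : nat, (1 <= n)%nat ->
     u (S n) = (a + p * (c + 2 * RtoC (INR n)) + RtoC (INR n))
                 / ((RtoC (INR n) + 1) * (c + RtoC (INR n))) * u n
               - p * (p + 1) / ((RtoC (INR n) + 1) * (c + RtoC (INR n)))
                 * u (n - 1)%nat) :
  forall n, u n = cauchy (exp_coef p) (kummer_coef a c) n.
Proof.
  set (W := cauchy (exp_coef p) (kummer_coef a c)).
  apply (rec2_unique (fun n x1 x0 =>
     let N := RtoC (INR (S n)) in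
     (a + p * (c + 2 * N) + N) / ((N + 1) * (c + N)) * x1
     - p * (p + 1) / ((N + 1) * (c + N)) * x0)).
  - rewrite hu0. unfold W, cauchy, exp_coef, kummer_coef. rewrite sum_O. simpl. field.
  - rewrite hu1. unfold W, cauchy, exp_coef, kummer_coef. rewrite sum_n_CSr, sum_O. simpl.
    pose proof (c_plus_INR_neq_0 0) as Hc. simpl in Hc. rewrite Cplus_0_r in Hc.
    field. exact Hc.
  - intros n. rewrite hu by lia. now replace (S n - 1)%nat with n by lia.
  - intros n. cbv zeta.
    assert (HN : RtoC (INR (S n)) + 1 <> 0) by (rewrite <- RtoC_INR_S; apply RtoC_INR_S_neq_0).
    pose proof (c_plus_INR_neq_0 (S n)).
    transitivity (((a + p * (c + 2 * RtoC (INR (S n))) + RtoC (INR (S n))) * W (S n)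
                   - p * (p + 1) * W n) / ((RtoC (INR (S n)) + 1) * (c + RtoC (INR (S n))))).
    + unfold W.
      rewrite <- cauchy_exp_kummer_rec by (exact (deriv_exp_coef p) || exact kummer_coef_S).
      field. now split.
    + field. now split.
Qed.

Lemma kummer_term_S (z : C) (n : nat) :
  kummer_term a c z (S n)
  = (a + RtoC (INR n)) * z / (RtoC (INR (S n)) * (c + RtoC (INR n))) * kummer_term a c z n.
Proof.
  change (kummer_coef a c (S n) * z ^ S n
          = (a + RtoC (INR n)) * z / (RtoC (INR (S n)) * (c + RtoC (INR n)))
            * (kummer_coef a c n * z ^ n)).
  pose proof (RtoC_INR_S_neq_0 n). pose proof (c_plus_INR_neq_0 n).
  replace (kummer_coef a c (S n))
    with ((a + RtoC (INR n)) * kummer_coef a c n / (RtoC (INR (S n)) * (c + RtoC (INR n)))).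
  - rewrite Cpow_S. field. now split.
  - rewrite <- kummer_coef_S. field. now split.
Qed.

Lemma kummer_ratio_small (z : C) :
  eventually (fun n =>
    Cmod ((a + RtoC (INR n)) * z / (RtoC (INR (S n)) * (c + RtoC (INR n)))) <= / 2)%R.
Proof.
  (* Past T, |n + c| >= n / 2 and (|a| + n) |z| <= n (n + 1) / 4. *)
  set (T := (2 * Cmod c + 4 * Cmod z + 4 * Cmod a * Cmod z)%R).
  assert (HT : eventually (fun n => T < INR n)%R) by (apply is_lim_seq_INR; exists T; tauto).
  revert HT. apply filter_imp. intros n Hn.
  pose proof (c_plus_INR_neq_0 n) as Hc.
  pose proof (pos_INR n) as Hx. rewrite S_INR.
  set (x := INR n) in *.
  pose proof (Cmod_ge_0 a). pose proof (Cmod_ge_0 c). pose proof (Cmod_ge_0 z).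
  assert (Hnum : (Cmod (a + RtoC x) <= Cmod a + x)%R).
  { eapply Rle_trans; [apply Cmod_triangle|]. rewrite Cmod_R, Rabs_right; lra. }
  assert (Hden : (x - Cmod c <= Cmod (c + RtoC x))%R).
  { pose proof (Cmod_triangle (c + RtoC x) (- c)) as Htri.
    replace (c + RtoC x + - c) with (RtoC x) in Htri by ring.
    rewrite Cmod_opp, Cmod_R, Rabs_right in Htri; lra. }
  rewrite Cmod_div, !Cmod_mult, Cmod_R, Rabs_right.
  - apply Rle_div_l; [apply Rmult_lt_0_compat; [lra | now apply Cmod_gt_0] |].
    unfold T in Hn. pose proof (Rmult_le_pos _ _ (Cmod_ge_0 a) (Cmod_ge_0 z)).
    assert (Hz : (Cmod (a + RtoC x) * Cmod z <= (Cmod a + x) * Cmod z)%R)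
      by (apply Rmult_le_compat_r; assumption).
    assert (Hquad : ((Cmod a + x) * Cmod z <= / 4 * (x * (x + 1)))%R).
    { assert (x * Cmod z <= x * (x / 4))%R by (apply Rmult_le_compat_l; lra). lra. }
    assert (Hhalf : (/ 4 * (x * (x + 1)) <= / 2 * ((x + 1) * (x - Cmod c)))%R).
    { assert ((x + 1) * (x / 2) <= (x + 1) * (x - Cmod c))%R
        by (apply Rmult_le_compat_l; lra). lra. }
    assert (Hd : ((x + 1) * (x - Cmod c) <= (x + 1) * Cmod (c + RtoC x))%R)
      by (apply Rmult_le_compat_l; lra).
    lra.
  - lra.
  - apply Cmult_neq_0; [apply RtoC_neq_0; lra | exact Hc].
Qed.

Lemma ex_series_Cmod_kummer_term (z : C) : ex_series (fun n => Cmod (kummer_term a c z n)).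
Proof.
  destruct (kummer_ratio_small z) as [N HN].
  apply (ex_series_ratio _ (/ 2) N); [lra | intros; apply Cmod_ge_0 |].
  intros n Hn. rewrite kummer_term_S, Cmod_mult.
  apply Rmult_le_compat_r; [apply Cmod_ge_0 | now apply HN].
Qed.

Lemma is_series_kummer (z : C) : is_series (kummer_term a c z) (kummerM a c z).
Proof.
  pose proof (ex_series_Cmod_kummer_term z) as H.
  apply is_series_C. split; apply Series_correct, ex_series_Rabs.
  - now apply ex_series_Rabs_Re.
  - now apply ex_series_Rabs_Im.
Qed.

Lemma is_series_exp_kummer (p z : C) :
  is_series (fun n => cauchy (exp_coef p) (kummer_coef a c) n * z ^ n)
            (cexp (p * z) * kummerM a c z).
Proof.
  apply (is_series_ext (cauchy (exp_coef (p * z)) (kummer_term a c z))).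
  - intros n. rewrite <- cauchy_pow. apply cauchy_ext_l. apply exp_coef_mult.
  - apply is_series_cauchy; auto using is_series_cexp, is_series_kummer,
      ex_series_Cmod_exp_coef, ex_series_Cmod_kummer_term.
Qed.

End Kummer.

Theorem theorem2p3 (a c p : C) (u v : nat -> C)
  (hc : forall n : nat, c <> - RtoC (INR n))
  (hu0 : u 0%nat = 1) (hu1 : u 1%nat = a / c + p)
  (hv0 : v 0%nat = 1) (hv1 : v 1%nat = a / c - p)
  (hu : forall n : nat, (1 <= n)%nat ->
     u (S n) = (a + p * (c + 2 * RtoC (INR n)) + RtoC (INR n))
                 / ((RtoC (INR n) + 1) * (c + RtoC (INR n))) * u n
               - p * (p + 1) / ((RtoC (INR n) + 1) * (c + RtoC (INR n)))
                 * u (n - 1)%nat)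
  (hv : forall n : nat, (1 <= n)%nat ->
     v (S n) = (a - p * (c + 2 * RtoC (INR n)) + RtoC (INR n))
                 / ((RtoC (INR n) + 1) * (c + RtoC (INR n))) * v n
               - (p - 1) * p / ((RtoC (INR n) + 1) * (c + RtoC (INR n)))
                 * v (n - 1)%nat) :
  forall z : C,
    is_series (fun n : nat => (u n + v n) / 2 * z ^ n)
              (ccosh (p * z) * kummerM a c z).
Proof.
  intros z.
  pose proof (cauchy_exp_kummer_eq a c hc p u hu0 hu1 hu) as Hu.
  assert (Hv : forall n, v n = cauchy (exp_coef (- p)) (kummer_coef a c) n).
  { apply (cauchy_exp_kummer_eq a c hc (- p) v hv0).
    - rewrite hv1. ring.
    - intros n Hn. rewrite (hv n Hn).
      replace (a - p * (c + 2 * RtoC (INR n))) with (a + - p * (c + 2 * RtoC (INR n))) by ring.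
      now replace ((p - 1) * p) with (- p * (- p + 1)) by ring. }
  pose proof (is_series_plus _ _ _ _ (is_series_exp_kummer a c hc p z)
                                     (is_series_exp_kummer a c hc (- p) z)) as Hsum.
  apply (is_series_scal_l (/ 2)) in Hsum.
  replace (ccosh (p * z) * kummerM a c z)
    with (/ 2 * (cexp (p * z) * kummerM a c z + cexp (- p * z) * kummerM a c z)).
  - revert Hsum. apply is_series_ext. intros n.
    change (/ 2 * (cauchy (exp_coef p) (kummer_coef a c) n * z ^ n
                   + cauchy (exp_coef (- p)) (kummer_coef a c) n * z ^ n)
            = (u n + v n) / 2 * z ^ n).
    rewrite Hu, Hv. field.
  - unfold ccosh. replace (- (p * z)) with (- p * z) by ring. field.
Qed.
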